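(* If the link function is unknown, the optimal policy cannot be identified from the transitions and the comparison probabilities, even when there are only two candidate link functions: there exist an episodic MDP (with horizon $H=2$, known transitions), two link functions $\sigma_1,\sigma_2$ and two reward functions $r^{(1)},r^{(2)}$ such that $\sigma_1(r^{(1)}(\tau)-r^{(1)}(\tau'))=\sigma_2(r^{(2)}(\tau)-r^{(2)}(\tau'))$ for all pairs of trajectories $\tau,\tau'$, while the optimal policy with respect to $r^{(1)}$ and the optimal policy with respect to $r^{(2)}$ differ (each is suboptimal for the other reward).
   Context: Episodic MDP with trajectories $\tau$; a comparison oracle with link function $\sigma$ and reward $r$ returns $\tau\succ\tau'$ with probability $\sigma(r(\tau)-r(\tau'))$. A policy is optimal for $r$ if it maximizes $\mathbb{E}_{\tau\sim\pi}[r(\tau)]$. *)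

From HB Require Import structures.
From mathcomp Require Import all_boot all_order all_algebra.
From mathcomp Require Import reals.
Set Implicit Arguments. Unset Strict Implicit. Unset Printing Implicit Defensive.
Import Order.TTheory GRing.Theory Num.Theory.
Local Open Scope ring_scope.

Section Episodic.
Variable R : realType.

(* Link function: strictly increasing, valued in [0,1], and
   sigma(x) + sigma(-x) = 1 (so that P(tau > tau') + P(tau' > tau) = 1). *)
Definition link_function (sigma : R -> R) : Prop :=
  (forall x, 0 <= sigma x <= 1) /\
  (forall x y, x < y -> sigma x < sigma y) /\
  (forall x, sigma x + sigma (- x) = 1).

Variables (S A : finType).

Definition is_dist (T : finType) (p : T -> R) : Prop :=
  (forall t, 0 <= p t) /\ \sum_(t : T) p t = 1.

Definition valid_mdp2 (mu : S -> R) (P : S -> A -> S -> R) : Prop :=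
  is_dist mu /\ (forall s a, is_dist (P s a)).

Definition traj := (S * A * S * A)%type.

Record policy2 := Policy2 {
  pol1 : S -> A -> R;
  pol2 : S * A * S -> A -> R
}.

Definition valid_policy2 (pi : policy2) : Prop :=
  (forall s, is_dist (pol1 pi s)) /\ (forall h, is_dist (pol2 pi h)).

Definition traj_prob (mu : S -> R) (P : S -> A -> S -> R) (pi : policy2)
  (tau : traj) : R :=
  let: (s1, a1, s2, a2) := tau in
  mu s1 * pol1 pi s1 a1 * P s1 a1 s2 * pol2 pi (s1, a1, s2) a2.

Definition expected_reward (mu : S -> R) (P : S -> A -> S -> R)
  (r : traj -> R) (pi : policy2) : R :=
  \sum_(tau : traj) traj_prob mu P pi tau * r tau.

Definition optimal_policy (mu : S -> R) (P : S -> A -> S -> R)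
  (r : traj -> R) (pi : policy2) : Prop :=
  valid_policy2 pi /\
  forall pi', valid_policy2 pi' ->
    expected_reward mu P r pi' <= expected_reward mu P r pi.

End Episodic.

From HB Require Import structures.
From mathcomp Require Import all_boot all_order all_algebra.
From mathcomp Require Import reals.
From mathcomp Require Import ring lra.
(* The expected reward is affine in the reward, while comparisons only see a link function
   applied to reward differences.  Let r2 take the values 0, 1, 3 and r1 = phi o r2 for an
   odd increasing phi with phi 1 = 1, phi 2 = 4, phi 3 = 5: phi is additive on the
   differences of these values, so sigma (r1 tau - r1 tau') = (sigma o phi) (r2 tau - r2 tau'),
   yet phi is not linear.  A gamble paying the top reward with probability 1/4 is then worth
   5/4 under r1 but 3/4 under r2, against a sure reward of 1. *)

Set Implicit Arguments. Unset Strict Implicit. Unset Printing Implicit Defensive.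
Import Order.TTheory GRing.Theory Num.Theory.
Local Open Scope ring_scope.

Section Links.
Variable R : realType.

Lemma link_function_comp (sigma phi : R -> R) :
  link_function sigma -> {homo phi : x y / x < y} -> {morph phi : x / - x} ->
  link_function (sigma \o phi).
Proof.
move=> [sigma01 [sigma_lt sigmaN]] phi_lt phiN; split; [|split] => /=.
- by move=> x; apply: sigma01.
- by move=> x y /phi_lt; apply: sigma_lt.
- by move=> x; rewrite phiN sigmaN.
Qed.

Definition softsign (x : R) : R := x / (1 + `|x|).

Lemma softsignN : {morph softsign : x / - x}.
Proof. by move=> x; rewrite /softsign normrN mulNr. Qed.

Lemma norm_softsign_le1 x : `|softsign x| <= 1.
Proof.
have pos : 0 < 1 + `|x| by rewrite ltr_pwDl.
by rewrite /softsign normf_div (gtr0_norm pos) ler_pdivrMr // mul1r lerDr.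
Qed.

Lemma ltr_softsign : {homo softsign : x y / x < y}.
Proof.
move=> x y lt_xy.
have pos (z : R) : 0 < 1 + `|z| by rewrite ltr_pwDl.
rewrite /softsign ltr_pdivrMr // mulrAC ltr_pdivlMr //.
have [x0|x0] := leP 0 x; have [y0|y0] := leP 0 y.
- rewrite (ger0_norm x0) (ger0_norm y0); nra.
- lra.
- rewrite (ltr0_norm x0) (ger0_norm y0); nra.
- rewrite (ltr0_norm x0) (ltr0_norm y0); nra.
Qed.

Definition softsign_link (x : R) : R := (1 + softsign x) / 2.

Lemma link_function_softsign : link_function softsign_link.
Proof.
rewrite /softsign_link; split; [|split].
- move=> x; have := norm_softsign_le1 x; rewrite ler_norml => /andP[? ?].
  apply/andP; split; lra.
- move=> x y /ltr_softsign; lra.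
- move=> x; rewrite softsignN; lra.
Qed.

Definition clamp12 (x : R) : R := Num.max 1 (Num.min x 2).

Lemma ler_clamp12 : {homo clamp12 : x y / x <= y}.
Proof. by move=> x y le_xy; rewrite le_max2 // le_min2. Qed.

Lemma clamp12_le1 x : x <= 1 -> clamp12 x = 1.
Proof. by move=> le_x1; rewrite /clamp12 max_l // ge_min le_x1. Qed.

Lemma clamp12_ge2 x : 2 <= x -> clamp12 x = 2.
Proof. by move=> le2x; rewrite /clamp12 min_r // max_r // ler1n. Qed.

Definition stretch (x : R) : R := x + 2 * (clamp12 x - clamp12 (- x)).

Lemma stretchN : {morph stretch : x / - x}.
Proof. move=> x; rewrite /stretch opprK; ring. Qed.

Lemma ltr_stretch : {homo stretch : x y / x < y}.
Proof.
move=> x y lt_xy; rewrite /stretch.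
have := ler_clamp12 (ltW lt_xy).
have : clamp12 (- y) <= clamp12 (- x) by apply: ler_clamp12; rewrite lerN2 ltW.
lra.
Qed.

Lemma stretch_small x : `|x| <= 1 -> stretch x = x.
Proof.
rewrite ler_norml => /andP[le_Nx1 le_x1].
by rewrite /stretch !clamp12_le1 1?lerNl // subrr mulr0 addr0.
Qed.

Lemma stretch_large x : 2 <= x -> stretch x = x + 2.
Proof.
by move=> le2x; rewrite /stretch clamp12_ge2 // clamp12_le1; [ring | lra].
Qed.

(* The only nontrivial instance is stretch 1 + stretch 2 = 1 + 4 = stretch 3. *)
Lemma stretch_sub_on : {in [:: 0; 1; 3] &, {morph stretch : x y / x - y}}.
Proof.
have stretch0 : stretch 0 = 0 by rewrite stretch_small ?normr0.
have stretch31 : stretch (3 - 1) = stretch 3 - stretch 1.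
  rewrite [LHS]stretch_large ?[stretch 3]stretch_large ?stretch_small ?normr1 //; lra.
move=> x y; rewrite !inE => /or3P[]/eqP-> /or3P[]/eqP->;
  rewrite ?subrr ?subr0 ?sub0r ?stretchN ?stretch0 ?subr0 ?sub0r //.
by rewrite -opprB stretchN stretch31 opprB.
Qed.

End Links.

Arguments softsign_link {R} x.
Arguments stretch {R} x.

Section BanditMDP.
Variables (R : realType) (S A : finType).

Lemma sum_pair (I J : finType) (F : I * J -> R) :
  \sum_(p : I * J) F p = \sum_i \sum_j F (i, j).
Proof. by rewrite pair_bigA; apply: eq_bigr => -[]. Qed.

Lemma sum_traj (F : traj S A -> R) :
  \sum_tau F tau = \sum_s1 \sum_a1 \sum_s2 \sum_a2 F (s1, a1, s2, a2).
Proof. by rewrite !sum_pair. Qed.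

Lemma sum_delta (T : finType) (t0 : T) (F : T -> R) :
  \sum_t (t == t0)%:R * F t = F t0.
Proof.
rewrite (bigD1 t0) //= eqxx mul1r big1 ?addr0 // => t /negbTE->.
by rewrite mul0r.
Qed.

Definition point_mass (s0 : S) (s : S) : R := (s == s0)%:R.

Definition bandit_reward (g : A -> S -> R) (tau : traj S A) : R :=
  let: (_, a1, s2, _) := tau in g a1 s2.

Definition const_policy (a : A) : policy2 R S A :=
  Policy2 (fun _ b => (b == a)%:R) (fun _ b => (b == a)%:R).

Lemma const_policy_valid a : valid_policy2 (const_policy a).
Proof.
have dist_a : is_dist (fun b : A => (b == a)%:R : R).
  split=> [b|]; first exact: ler0n.
  by under eq_bigr do rewrite -[_%:R]mulr1; rewrite sum_delta.
by split.
Qed.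

Variables (s0 : S) (P : S -> A -> S -> R) (g : A -> S -> R).

Definition action_value (a : A) : R := \sum_s2 P s0 a s2 * g a s2.

Lemma expected_bandit_reward pi : valid_policy2 pi ->
  expected_reward (point_mass s0) P (bandit_reward g) pi =
  \sum_a pol1 pi s0 a * action_value a.
Proof.
move=> [_ pol2_dist]; rewrite /expected_reward sum_traj (bigD1 s0) //=.
rewrite [X in _ + X]big1 ?addr0 => [|s1 /negbTE s1_ne]; last first.
  by do 3!(apply: big1 => ? _); rewrite /point_mass /= s1_ne !mul0r.
apply: eq_bigr => a _; rewrite /action_value mulr_sumr; apply: eq_bigr => s2 _.
have [_ pol2_sum1] := pol2_dist (s0, a, s2).
rewrite -[RHS]mulr1 -pol2_sum1 mulr_sumr; apply: eq_bigr => a2 _.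
by rewrite /point_mass eqxx /=; ring.
Qed.

Lemma expected_const_policy a :
  expected_reward (point_mass s0) P (bandit_reward g) (const_policy a) =
  action_value a.
Proof.
by rewrite expected_bandit_reward; [exact: sum_delta | exact: const_policy_valid].
Qed.

Section Maximizer.
Variable a : A.
Hypothesis a_max : forall b, action_value b <= action_value a.

Lemma const_policy_optimal :
  optimal_policy (point_mass s0) P (bandit_reward g) (const_policy a).
Proof.
split=> [|pi pi_valid]; first exact: const_policy_valid.
have [pi_ge0 pi_sum1] := pi_valid.1 s0.
rewrite expected_const_policy expected_bandit_reward //.
rewrite -[leRHS]mul1r -pi_sum1 mulr_suml.
by apply: ler_sum => b _; rewrite ler_wpM2l ?pi_ge0 ?a_max.
Qed.

(* The regret [\sum_c pi c * (value a - value c)] of an optimal policy is zero and has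
   nonnegative terms. *)
Lemma optimal_policy_avoids_worse pi b :
  optimal_policy (point_mass s0) P (bandit_reward g) pi ->
  action_value b < action_value a -> pol1 pi s0 b = 0.
Proof.
move=> [pi_valid pi_opt] lt_ba.
have [pi_ge0 pi_sum1] := pi_valid.1 s0.
have terms_ge0 c : 0 <= pol1 pi s0 c * (action_value a - action_value c).
  by rewrite mulr_ge0 // subr_ge0.
have regret0 : \sum_c pol1 pi s0 c * (action_value a - action_value c) = 0.
  apply/eqP; rewrite eq_le sumr_ge0 // andbT.
  under eq_bigr do rewrite mulrBr.
  rewrite sumrB -mulr_suml pi_sum1 mul1r subr_le0 -expected_bandit_reward //.
  by rewrite -expected_const_policy pi_opt //; exact: const_policy_valid.
have /eqP : pol1 pi s0 b * (action_value a - action_value b) = 0.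
  by apply: (psumr_eq0P _ regret0) => // c _; apply: terms_ge0.
by rewrite mulf_eq0 subr_eq0 (gt_eqF lt_ba) orbF => /eqP.
Qed.

End Maximizer.
End BanditMDP.

Arguments point_mass {R S} s0 s.
Arguments const_policy {R S A} a.

Section Coin.
Variable R : realType.

Definition coin_kernel (s1 a s2 : bool) : R :=
  if a then (if s2 then 4^-1 else 1 - 4^-1) else (~~ s2)%:R.

Definition coin_reward (a s2 : bool) : R := if a then (if s2 then 3 else 0) else 1.

Lemma coin_mdp_valid : valid_mdp2 (point_mass false) coin_kernel.
Proof.
split; first by split=> [s|]; [exact: ler0n | rewrite big_bool /= add0r].
move=> s1 a; split=> [s2|]; rewrite ?big_bool /coin_kernel.
  by case: a; case: s2 => /=; lra.
by case: a => /=; lra.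
Qed.

Lemma coin_reward_range a s2 : coin_reward a s2 \in [:: 0; 1; 3].
Proof. by case: a; case: s2; rewrite !inE eqxx ?orbT. Qed.

Let value := action_value false coin_kernel.

Lemma coin_action_values :
  [/\ value (fun a s2 => stretch (coin_reward a s2)) true = 5 / 4,
      value (fun a s2 => stretch (coin_reward a s2)) false = 1,
      value coin_reward true = 3 / 4 & value coin_reward false = 1].
Proof.
have stretch0 : stretch 0 = 0 :> R by rewrite stretch_small ?normr0.
have stretch1 : stretch 1 = 1 :> R by rewrite stretch_small ?normr1.
have stretch3 : stretch 3 = 5 :> R by rewrite stretch_large //; lra.
rewrite /value /action_value !big_bool /coin_kernel /coin_reward /=.
by rewrite stretch0 stretch1 stretch3; split; lra.
Qed.

End Coin.

Theorem lemma1 (R : realType) :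
  exists (S A : finType) (mu : S -> R) (P : S -> A -> S -> R)
         (sigma1 sigma2 : R -> R) (r1 r2 : traj S A -> R),
    valid_mdp2 mu P /\
    link_function sigma1 /\ link_function sigma2 /\
    (forall tau tau' : traj S A,
        sigma1 (r1 tau - r1 tau') = sigma2 (r2 tau - r2 tau')) /\
    (exists pi, optimal_policy mu P r1 pi) /\
    (exists pi, optimal_policy mu P r2 pi) /\
    (forall pi : policy2 R S A,
        optimal_policy mu P r1 pi -> ~ optimal_policy mu P r2 pi).
Proof.
have [v1_risky v1_safe v2_risky v2_safe] := @coin_action_values R.
exists bool, bool, (point_mass false), (coin_kernel R),
  softsign_link, (softsign_link \o stretch),
  (bandit_reward (fun a s2 => stretch (coin_reward R a s2))),
  (bandit_reward (coin_reward R)).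
split; first exact: coin_mdp_valid.
split; first exact: link_function_softsign.
split; first by apply: link_function_comp (@ltr_stretch R) (@stretchN R);
  exact: link_function_softsign.
split.
  move=> [[[s1 a1] s2] a2] [[[s1' a1'] s2'] a2'] /=.
  by rewrite stretch_sub_on ?coin_reward_range.
split; first by exists (const_policy true); apply: const_policy_optimal; case; lra.
split; first by exists (const_policy false); apply: const_policy_optimal; case; lra.
move=> pi opt1 opt2.
have safe0 : pol1 pi false false = 0.
  by apply: (optimal_policy_avoids_worse (a := true) _ opt1); [case | ]; lra.
have risky0 : pol1 pi false true = 0.
  by apply: (optimal_policy_avoids_worse (a := false) _ opt2); [case | ]; lra.
have [_ pi_sum1] := opt1.1.1 false.
by move: pi_sum1; rewrite big_bool /= safe0 risky0; lra.
Qed.
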